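(* Let $C$ be a coalgebra over a field $\Bbbk$. Then $C$ is left f-qcF if and only if every finite dimensional right coideal of $C$ embeds, as a left $C^*$-module, in a free left $C^*$-module.
   Context: The dual algebra $C^*$ has product $(fg)(x)=\sum f(x_1)g(x_2)$; a right $C$-comodule $M$ (coaction $m\mapsto\sum m_0\otimes m_1$) is a left $C^*$-module via $f\rightharpoonup m=\sum m_0f(m_1)$. A right coideal of $C$ is a subspace $I$ with $\Delta(I)\subseteq I\otimes C$ (a right $C$-subcomodule of $C$). $C$ is left f-qcF if every finite dimensional right $C$-comodule embeds, as a left $C^*$-module, in a free left $C^*$-module. *)

From HB Require Import structures.
From mathcomp Require Import all_boot all_order all_algebra.
From Stdlib Require List.
Set Implicit Arguments. Unset Strict Implicit. Unset Printing Implicit Defensive.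
Import GRing.Theory.
Local Open Scope ring_scope.

(* An element of V (x) W is represented by a finite list of pairs
   [:: (v1,w1); ...] standing for sum_i v_i (x) w_i.  Two representatives
   denote the same tensor iff they agree under all pairs of linear
   functionals (V (x) W embeds in (V^* (x) W^* )^* over a field). *)

Section Coalg.
Variable k : fieldType.

Notation dual V := ({scalar V} : Type).

Definition tev2 (V W : lmodType k) (f : dual V) (g : dual W)
  (s : seq (V * W)) : k := \sum_(p <- s) f p.1 * g p.2.

Definition teq2 (V W : lmodType k) (s t : seq (V * W)) : Prop :=
  forall (f : dual V) (g : dual W), tev2 f g s = tev2 f g t.

Definition teq3 (U V W : lmodType k) (s t : seq (U * V * W)) : Prop :=
  forall (f : dual U) (g : dual V) (h : dual W),
    \sum_(p <- s) f p.1.1 * g p.1.2 * h p.2 =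
    \sum_(p <- t) f p.1.1 * g p.1.2 * h p.2.

Record coalgebra (C : lmodType k) := Coalgebra {
  cop : C -> seq (C * C);
  counit : dual C;
  cop_linear : forall (f g : dual C) (a : k) (x y : C),
      tev2 f g (cop (a *: x + y)) = a * tev2 f g (cop x) + tev2 f g (cop y);
  coassoc : forall x : C,
      teq3 (flatten [seq [seq (q.1, q.2, p.2) | q <- cop p.1] | p <- cop x])
           (flatten [seq [seq (p.1, q.1, q.2) | q <- cop p.2] | p <- cop x]);
  counitl : forall x : C, \sum_(p <- cop x) counit p.1 *: p.2 = x;
  counitr : forall x : C, \sum_(p <- cop x) counit p.2 *: p.1 = x
}.

Variables (C : lmodType k) (cC : coalgebra C).

Record rcomodule (M : lmodType k) := RComodule {
  coact : M -> seq (M * C);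
  coact_linear : forall (f : dual M) (g : dual C) (a : k) (x y : M),
      tev2 f g (coact (a *: x + y)) = a * tev2 f g (coact x) + tev2 f g (coact y);
  coact_assoc : forall x : M,
      teq3 (flatten [seq [seq (q.1, q.2, p.2) | q <- coact p.1] | p <- coact x])
           (flatten [seq [seq (p.1, q.1, q.2) | q <- cop cC p.2] | p <- coact x]);
  coact_counit : forall x : M, \sum_(p <- coact x) counit cC p.2 *: p.1 = x
}.

Definition conv (f g : C -> k) : C -> k :=
  fun c => \sum_(p <- cop cC c) f p.1 * g p.2.

Definition dact (M : lmodType k) (rho : rcomodule M) (f : dual C) (m : M) : M :=
  \sum_(p <- coact rho m) f p.2 *: p.1.

(* The C^*-submodule S (a subspace of M stable under act) embeds, as a left
   C^*-module, into a free left C^*-module  (C^* )^(I) = finitely supported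
   families indexed by an arbitrary type I, with action f.(h_i) = (f h_i). *)
Definition embeds_in_free (M : lmodType k) (S : M -> Prop)
    (act : dual C -> M -> M) : Prop :=
  exists (I : Type) (phi : M -> I -> dual C),
    [/\ (forall x, S x -> exists r : seq I,
            forall i, ~ List.In i r -> forall c, phi x i c = 0),
        (forall (a : k) x y, S x -> S y -> forall i c,
            phi (a *: x + y) i c = a * phi x i c + phi y i c),
        (forall (f : dual C) x, S x -> forall i c,
            phi (act f x) i c = conv f (phi x i) c)
      & (forall x y, S x -> S y -> (forall i c, phi x i c = phi y i c) -> x = y)].

Definition left_fqcF : Prop :=
  forall (M : vectType k) (rho : rcomodule M),
    embeds_in_free (fun _ => True) (dact rho).

Definition inspan (s : seq C) (x : C) : Prop :=
  exists a : 'I_(size s) -> k, x = \sum_(i < size s) a i *: s`_i.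

Definition right_coideal (s : seq C) : Prop :=
  forall x, inspan s x ->
    exists t : seq (C * C), (forall p, List.In p t -> inspan s p.1) /\
                            teq2 (cop cC x) t.

Definition cact (f : dual C) (x : C) : C := \sum_(p <- cop cC x) f p.2 *: p.1.

End Coalg.

(* If rho e_j = sum_i e_i (x) c_ij for a basis (e_j) of a finite dimensional
   comodule M, the coefficients c_ij span a finite dimensional right coideal D
   with Delta c_ij = sum_l c_il (x) c_lj, and m |-> (sum coord_i (m_0) m_1)_i
   is a C^*-linear map M -> D^n, injective because counit recovers the
   coordinates of m; an embedding of D into a free module thus gives one of M.
   Conversely a finite dimensional right coideal is itself a finite
   dimensional comodule whose C^*-action is the restriction of that of C.
   Tensors are only known through their pairings with functionals, so the
   argument uses throughout that linear functionals separate the points of C,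
   which rests on Zorn's lemma. *)

From HB Require Import structures.
From mathcomp Require Import all_boot all_order all_algebra.
From mathcomp Require Import boolp classical_sets.
Import GRing.Theory.
Set Implicit Arguments.
Unset Strict Implicit.
Unset Printing Implicit Defensive.
Local Open Scope ring_scope.

Lemma In_mem (T : eqType) (x : T) (s : seq T) : List.In x s <-> x \in s.
Proof.
elim: s => [|y s IHs] //=; rewrite in_cons; split.
  by case=> [->|/IHs ->]; rewrite ?eqxx ?orbT.
by case/orP=> [/eqP ->|/IHs]; [left|right].
Qed.

Lemma In_flatten_map (A B : Type) (f : A -> seq B) (l : seq A) a y :
  List.In a l -> List.In y (f a) -> List.In y (flatten (map f l)).
Proof.
elim: l => [|b l IHl] //= [->|la] ya; apply: List.in_or_app; first by left.
by right; exact: IHl.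
Qed.

Section ScalarExtension.
Variables (k : fieldType) (V : lmodType k).
Local Open Scope classical_set_scope.

Definition scalar_of (h : V -> k)
    (hP : forall a x y, h (a *: x + y) = a * h x + h y) : {scalar V} :=
  HB.pack_for {scalar V} h (GRing.isLinear.Build k V k *%R h hP).

Lemma scalar_sumZ (F : {scalar V}) (T : Type) (l : seq T) (h : T -> k)
    (x : T -> V) :
  F (\sum_(p <- l) h p *: x p) = \sum_(p <- l) h p * F (x p).
Proof. by rewrite linear_sum; apply: eq_bigr => p _; rewrite linearZ. Qed.

Definition linear_graph (G : set (V * k)) : Prop :=
  [/\ G (0, 0),
      (forall c x a y b, G (x, a) -> G (y, b) -> G (c *: x + y, c * a + b))
    & (forall x a b, G (x, a) -> G (x, b) -> a = b)].

Lemma linear_graph_bigcup (G0 : set (V * k)) (F : set (set (V * k))) :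
  linear_graph G0 -> (forall X, F X -> linear_graph (X `|` G0)) ->
  total_on F subset -> linear_graph (\bigcup_(X in F) X `|` G0).
Proof.
move=> linG0 linF totF; set U := _ `|` G0.
have common p q : U p -> U q ->
    exists H, [/\ linear_graph H, H `<=` U, H p & H q].
  have sub X : F X -> X `|` G0 `<=` U.
    by move=> FX z [Xz|Gz]; [left; exists X | right].
  move=> [[X FX Xp]|G0p] [[Y FY Yq]|G0q].
  - have [XY|YX] := totF X Y FX FY.
    + exists (Y `|` G0).
      by split; [exact: linF|exact: sub|left; exact: XY|left].
    + exists (X `|` G0).
      by split; [exact: linF|exact: sub|left|left; exact: YX].
  - by exists (X `|` G0); split; [exact: linF|exact: sub|left|right].
  - by exists (Y `|` G0); split; [exact: linF|exact: sub|right|left].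
  - by exists G0; split=> // z; right.
split; first by right; case: linG0.
- move=> c x a y b Ux Uy.
  by have [H [[_ HD _] HU Hx Hy]] := common _ _ Ux Uy; exact/HU/HD.
- move=> x a b Ux Uy.
  by have [H [[_ _ Hfun] _ Hx Hy]] := common _ _ Ux Uy; exact: Hfun Hx Hy.
Qed.

Lemma linear_graph_adjoin (G : set (V * k)) (v : V) :
  linear_graph G -> (forall a, ~ G (v, a)) ->
  linear_graph [set p | exists w c, G (w, p.2) /\ p.1 = w + c *: v].
Proof.
move=> [G00 GD Gfun] Gv; split.
- by exists 0, 0; rewrite scale0r addr0.
- move=> c x a y b [w1 [c1 [H1 /= ->]]] [w2 [c2 [H2 /= ->]]].
  exists (c *: w1 + w2), (c * c1 + c2); split; first exact: GD.
  by rewrite /= scalerDr scalerA addrACA scalerDl.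
- move=> x a b [w1 [c1 [H1 /= E1]]] [w2 [c2 [H2 /= E2]]].
  have [c12|ne] := eqVneq c1 c2.
    move: E2; rewrite E1 c12 => /addIr E; rewrite E in H1; exact: Gfun H1 H2.
  have vE : v = (c1 - c2)^-1 *: (-1 *: w1 + w2) + 0.
    have E : w1 + c1 *: v = w2 + c2 *: v by rewrite -E1 -E2.
    have -> : -1 *: w1 + w2 = (c1 - c2) *: v.
      by rewrite scaleN1r scalerBl -[w2](addrK (c2 *: v)) -E addrA addKr.
    by rewrite addr0 scalerA mulVf ?scale1r // subr_eq0.
  case: (Gv ((c1 - c2)^-1 * (-1 * a + b) + 0)).
  by rewrite {1}vE; exact: GD (GD _ _ _ _ _ H1 H2) G00.
Qed.

Lemma linear_graph_extend (G0 : set (V * k)) : linear_graph G0 ->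
  exists F : {scalar V}, forall x a, G0 (x, a) -> F x = a.
Proof.
(* Zorn_bigcup also covers the empty chain, so the candidate graphs are taken
   relative to G0: a set G stands for the graph G `|` G0. *)
move=> linG0.
have [A [linA Amax]] := @Zorn_bigcup _ (fun G => linear_graph (G `|` G0))
  (fun F => linear_graph_bigcup linG0).
have [H0 HD Hfun] := linA; set H := A `|` G0 in H0 HD Hfun.
have Htot x : exists a, H (x, a).
  apply: contrapT => Hx.
  have {}Hx a : ~ H (x, a) by move=> Hxa; apply: Hx; exists a.
  have := linear_graph_adjoin linA Hx; set H' := [set p | _] => linH'.
  have HH' : H `<=` H' by move=> [y a] Hya; exists y, 0; rewrite scale0r addr0.
  apply: (Amax H'); last first.
    by rewrite (_ : H' `|` G0 = H') // setUidl // => p G0p; apply: HH'; right.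
  split; first by move=> p Ap; apply: HH'; left.
  move=> /(_ (x, 0)) H'A; apply: (Hx 0); left; apply: H'A.
  by exists 0, 1; rewrite /= scale1r add0r; split=> //; right; case: linG0.
pose F x := sval (cid (Htot x)).
have HF x : H (x, F x) := svalP (cid (Htot x)).
have FP a x y : F (a *: x + y) = a * F x + F y.
  by apply: Hfun (HF _) _; exact: HD.
by exists (scalar_of FP) => x a G0x; apply: Hfun (HF x) _; right.
Qed.

Definition lin_indep (b : seq V) : Prop :=
  forall a : 'I_(size b) -> k, \sum_(i < size b) a i *: b`_i = 0 ->
    forall i, a i = 0.

Lemma scalar_coord_exists (b : seq V) (t : 'I_(size b) -> k) :
  lin_indep b -> exists F : {scalar V}, forall i : 'I_(size b), F b`_i = t i.
Proof.
move=> indb.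
pose G := fun p : V * k => exists a : 'I_(size b) -> k,
  p.1 = \sum_i a i *: b`_i /\ p.2 = \sum_i a i * t i.
have linG : linear_graph G.
  split.
  - by exists (fun=> 0); rewrite /= !big1 // => i _; rewrite ?scale0r ?mul0r.
  - move=> c x a y b' [a1 [/= -> ->]] [a2 [/= -> ->]].
    exists (fun i => c * a1 i + a2 i); split=> /=.
      rewrite scaler_sumr -big_split /=; apply: eq_bigr => i _.
      by rewrite scalerDl scalerA.
    rewrite mulr_sumr -big_split /=; apply: eq_bigr => i _.
    by rewrite mulrDl mulrA.
  - move=> x a1 a2 [c1 [/= E1 ->]] [c2 [/= E2 ->]].
    have D : \sum_i (c1 i - c2 i) *: b`_i = 0.
      by under eq_bigr do rewrite scalerBl; rewrite sumrB -E1 -E2 subrr.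
    apply/eqP; rewrite -subr_eq0 -sumrB; apply/eqP/big1 => i _.
    by rewrite -mulrBl (indb _ D) mul0r.
have [F HF] := linear_graph_extend linG.
exists F => i; apply: HF; exists (fun j => (i == j)%:R); split=> /=.
  rewrite (bigD1 i) //= eqxx scale1r big1 ?addr0 // => j /negbTE ji.
  by rewrite eq_sym ji scale0r.
rewrite (bigD1 i) //= eqxx mul1r big1 ?addr0 // => j /negbTE ji.
by rewrite eq_sym ji mul0r.
Qed.

Lemma scalar_separates (x y : V) : (forall F : {scalar V}, F x = F y) -> x = y.
Proof.
move=> Fxy; apply/eqP; rewrite -subr_eq0; apply/negPn/negP => xy_neq0.
have indxy : lin_indep [:: x - y].
  move=> a; rewrite big_ord1 => /eqP; rewrite scaler_eq0 (negbTE xy_neq0) orbF.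
  by move=> /eqP a0 i; rewrite (ord1 i).
have [F /(_ ord0) /= Fxy1] := scalar_coord_exists (fun=> 1) indxy.
by move: Fxy1; rewrite linearB /= Fxy subrr => /eqP; rewrite eq_sym oner_eq0.
Qed.

End ScalarExtension.

Section Span.
Variables (k : fieldType) (V : lmodType k).

Lemma inspan0 (s : seq V) : inspan s 0.
Proof. by exists (fun=> 0); rewrite big1 // => i _; rewrite scale0r. Qed.

Lemma inspanP (s : seq V) a x y :
  inspan s x -> inspan s y -> inspan s (a *: x + y).
Proof.
move=> [ax ->] [ay ->]; exists (fun i => a * ax i + ay i).
rewrite scaler_sumr -big_split /=; apply: eq_bigr => i _.
by rewrite scalerDl scalerA.
Qed.

Lemma inspan_sum (s : seq V) (T : Type) (l : seq T) (a : T -> k) (x : T -> V) :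
  (forall t, List.In t l -> inspan s (x t)) ->
  inspan s (\sum_(t <- l) a t *: x t).
Proof.
elim: l => [|t l IHl] sx; first by rewrite big_nil; exact: inspan0.
rewrite big_cons; apply: inspanP; first by apply: sx; left.
by apply: IHl => u lu; apply: sx; right.
Qed.

Lemma mem_inspan (s : seq V) x : x \in s -> inspan s x.
Proof.
move=> xs; have ix : (index x s < size s)%N by rewrite index_mem.
exists (fun i => (i == Ordinal ix)%:R).
rewrite (bigD1 (Ordinal ix)) //= eqxx scale1r nth_index // big1 ?addr0 //.
by move=> i /negbTE ->; rewrite scale0r.
Qed.

Lemma inspan_cons y (s : seq V) x :
  inspan (y :: s) x <-> exists c z, inspan s z /\ x = c *: y + z.
Proof.
split=> [[a ->]|[c [z [[a ->] ->]]]].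
  rewrite big_ord_recl /=.
  exists (a ord0), (\sum_(i < size s) a (lift ord0 i) *: s`_i).
  by split=> //; exists (fun i => a (lift ord0 i)).
exists (fun i : 'I_(size s).+1 => if unlift ord0 i is Some j then a j else c).
rewrite big_ord_recl /= unlift_none; congr (_ + _); apply: eq_bigr => i _.
by rewrite liftK.
Qed.

Lemma inspan_basis (s : seq V) :
  exists b, lin_indep b /\ forall x, inspan b x <-> inspan s x.
Proof.
elim: s => [|y s [b [indb sb]]]; first by exists [::]; split=> // a _ [].
have [yb|nyb] := pselect (inspan b y).
  exists b; split=> // x; rewrite inspan_cons sb; split.
    by move=> xs; exists 0, x; rewrite scale0r add0r.
  by move=> [c [z [zs ->]]]; apply: inspanP => //; apply/sb.
exists (y :: b); split=> [a|x]; last first.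
  by rewrite !inspan_cons; split=> -[c [z [/sb zs ->]]]; exists c, z.
rewrite big_ord_recl /= => E.
have a0 : a ord0 = 0.
  apply: contrapT => /eqP a0_neq0; apply: nyb.
  exists (fun i => - (a ord0)^-1 * a (lift ord0 i)).
  have -> : y = - (a ord0)^-1 *: \sum_(i < size b) a (lift ord0 i) *: b`_i.
    apply: (scalerI a0_neq0); rewrite scalerA mulrN mulfV // scaleN1r.
    by apply/eqP; rewrite -addr_eq0 E.
  by rewrite scaler_sumr; apply: eq_bigr => i _; rewrite scalerA.
rewrite a0 scale0r add0r in E.
by move=> i; case: (unliftP ord0 i) => [j ->|->] //; exact: indb E j.
Qed.

End Span.

Lemma scalar_vbasis (k : fieldType) (M : vectType k) (P : {scalar M}) w :
  P w = \sum_(l < \dim {:M}) coord (vbasis fullv) l w * P (vbasis fullv)`_l.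
Proof.
rewrite {1}(coord_vbasis (memvf w)) linear_sum; apply: eq_bigr => l _.
by rewrite linearZ.
Qed.

Section CoalgebraDual.
Variables (k : fieldType) (C : lmodType k) (cC : coalgebra C).

Definition conv_scalar (F G : {scalar C}) : {scalar C} :=
  scalar_of (cop_linear cC F G).

Lemma conv_scalarE F G x : conv_scalar F G x = tev2 F G (cop cC x).
Proof. by []. Qed.

Lemma scalar_cact (F h : {scalar C}) x : F (cact cC h x) = tev2 F h (cop cC x).
Proof.
by rewrite scalar_sumZ /tev2; apply: eq_bigr => p _; rewrite mulrC.
Qed.

Lemma teq2_cact (s t : seq (C * C)) (h : {scalar C}) : teq2 s t ->
  \sum_(p <- s) h p.2 *: p.1 = \sum_(p <- t) h p.2 *: p.1.
Proof.
move=> st; apply: scalar_separates => F; rewrite !scalar_sumZ.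
by have := st F h; rewrite /tev2 (eq_bigr _ (fun p _ => mulrC _ _)) => ->;
  apply: eq_bigr => p _; rewrite mulrC.
Qed.

(* Coassociativity: both sides are sum F (y_1) * g (y_2) * h (y_3). *)
Lemma cop_cact (F g h : {scalar C}) y :
  tev2 F g (cop cC (cact cC h y)) = tev2 F (conv_scalar g h) (cop cC y).
Proof.
rewrite -conv_scalarE scalar_sumZ; have := coassoc cC y F g h.
rewrite !big_flatten /= !big_map /tev2 /=.
under eq_bigr do rewrite big_map.
under [X in _ = X -> _]eq_bigr do rewrite big_map.
move=> E.
transitivity (\sum_(p <- cop cC y) \sum_(q <- cop cC p.1)
                F q.1 * g q.2 * h p.2).
  by apply: eq_bigr => p _; rewrite mulr_sumr; apply: eq_bigr => q _;
    rewrite mulrC.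
rewrite E; apply: eq_bigr => p _; rewrite mulr_sumr; apply: eq_bigr => q _.
by rewrite mulrA.
Qed.

Lemma right_coideal_gen (s : seq C) :
  (forall x, x \in s -> exists t : seq (C * C),
      (forall p, List.In p t -> inspan s p.1) /\ teq2 (cop cC x) t) ->
  right_coideal cC s.
Proof.
move=> coid_s x [a ->].
have tj (j : 'I_(size s)) : {t : seq (C * C) |
    (forall p, List.In p t -> inspan s p.1) /\ teq2 (cop cC s`_j) t}.
  by apply: cid; apply: coid_s; rewrite mem_nth.
exists (flatten [seq [seq (a j *: p.1, p.2) | p <- sval (tj j)]
                | j <- index_enum 'I_(size s)]); split.
  move=> p /In_mem /flattenP [l /mapP [j _ ->] /mapP [q /In_mem qin ->]] /=.
  have [/(_ q qin) sq _] := svalP (tj j).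
  by rewrite -[_ *: _]addr0; exact: inspanP sq (inspan0 _).
move=> F G; rewrite -conv_scalarE linear_sum /tev2 big_flatten /= big_map.
apply: eq_bigr => j _; rewrite -conv_scalarE linearZ /=.
rewrite (proj2 (svalP (tj j))) /tev2 big_map mulr_sumr.
by apply: eq_bigr => p _; rewrite /= linearZ mulrA.
Qed.

Lemma cact_inspan (s : seq C) (h : {scalar C}) y :
  right_coideal cC s -> inspan s y -> inspan s (cact cC h y).
Proof.
move=> coid_s /coid_s [t [ts yt]]; rewrite /cact (teq2_cact h yt).
by apply: inspan_sum => p /ts.
Qed.

Section CoefficientCoideal.
Variables (M : vectType k) (rho : rcomodule cC M).

Let n := \dim {:M}.
Let e := vbasis (fullv : {vspace M}).

Definition coef (i : 'I_n) (m : M) : C :=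
  \sum_(p <- coact rho m) coord e i p.1 *: p.2.

Lemma scalar_coef (G : {scalar C}) i m :
  G (coef i m) = tev2 (coord e i) G (coact rho m).
Proof. exact: scalar_sumZ. Qed.

Lemma scalar_coef_expand (G : {scalar C}) i m :
  G (coef i m) = \sum_(l < n) coord e l m * G (coef i e`_l).
Proof.
have := scalar_vbasis (scalar_of (coact_linear rho (coord e i) G)) m.
rewrite /= -scalar_coef => ->.
by apply: eq_bigr => l _; rewrite scalar_coef.
Qed.

Lemma coef_expand i m : coef i m = \sum_(l < n) coord e l m *: coef i e`_l.
Proof.
by apply: scalar_separates => G; rewrite scalar_coef_expand scalar_sumZ.
Qed.

Lemma coef_linear i a x y : coef i (a *: x + y) = a *: coef i x + coef i y.
Proof.
by apply: scalar_separates => G; rewrite linearP /= !scalar_coef coact_linear.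
Qed.

Lemma cop_coef (F G : {scalar C}) i m :
  tev2 F G (cop cC (coef i m)) = \sum_(l < n) F (coef i e`_l) * G (coef l m).
Proof.
rewrite -conv_scalarE scalar_sumZ; have := coact_assoc rho m (coord e i) F G.
rewrite !big_flatten /= !big_map /tev2 /=.
under eq_bigr do rewrite big_map.
under [X in _ = X -> _]eq_bigr do rewrite big_map.
move=> E.
transitivity (\sum_(p <- coact rho m) \sum_(q <- cop cC p.2)
                coord e i p.1 * F q.1 * G q.2).
  by apply: eq_bigr => p _; rewrite /tev2 mulr_sumr; apply: eq_bigr => q _;
    rewrite mulrA.
rewrite -E.
transitivity (\sum_(p <- coact rho m) F (coef i p.1) * G p.2).
  by apply: eq_bigr => p _; rewrite scalar_coef /tev2 mulr_suml.
transitivity (\sum_(p <- coact rho m) \sum_(l < n)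
                F (coef i e`_l) * (coord e l p.1 * G p.2)).
  apply: eq_bigr => p _; rewrite scalar_coef_expand mulr_suml.
  by apply: eq_bigr => l _; rewrite mulrCA mulrA.
rewrite exchange_big /=; apply: eq_bigr => l _.
by rewrite -mulr_sumr scalar_coef scalar_sumZ.
Qed.

Lemma coef_dact (f : {scalar C}) i m :
  coef i (dact rho f m) = cact cC f (coef i m).
Proof.
apply: scalar_separates => G.
rewrite scalar_coef_expand scalar_cact cop_coef; apply: eq_bigr => l _.
rewrite mulrC; congr (_ * _); rewrite scalar_coef /dact scalar_sumZ /tev2.
by apply: eq_bigr => p _; rewrite mulrC.
Qed.

Lemma counit_coef i m : counit cC (coef i m) = coord e i m.
Proof.
rewrite scalar_coef /tev2 -{2}(coact_counit rho m) scalar_sumZ.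
by apply: eq_bigr => p _; rewrite mulrC.
Qed.

Definition coefs : seq C :=
  flatten [seq [seq coef i e`_j | j : 'I_n <- index_enum 'I_n]
          | i <- index_enum 'I_n].

Lemma coef_basis_in_coefs (i j : 'I_n) : coef i e`_j \in coefs.
Proof.
by apply/flattenP; exists [seq coef i e`_j0 | j0 : 'I_n <- index_enum 'I_n];
  apply: map_f; rewrite mem_index_enum.
Qed.

Lemma coef_inspan i m : inspan coefs (coef i m).
Proof.
rewrite coef_expand; apply: inspan_sum => l _.
exact/mem_inspan/coef_basis_in_coefs.
Qed.

Lemma coefs_right_coideal : right_coideal cC coefs.
Proof.
apply: right_coideal_gen => x /flattenP [l /mapP [i _ ->] /mapP [j _ ->]].
exists [seq (coef i e`_l, coef l e`_j) | l : 'I_n <- index_enum 'I_n]; split.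
  by move=> p /In_mem /mapP [l' _ ->]; exact/mem_inspan/coef_basis_in_coefs.
by move=> F G; rewrite cop_coef /tev2 big_map.
Qed.

Lemma comodule_embeds_in_free :
  embeds_in_free cC (inspan coefs) (cact cC) ->
  embeds_in_free cC (fun _ => True) (dact rho).
Proof.
move=> [I [phi [phi_supp phi_lin phi_act phi_inj]]].
exists ('I_n * I)%type, (fun m p => phi (coef p.1 m) p.2); split.
- move=> x _.
  have r i : {r : seq I | forall j, ~ List.In j r -> forall c,
      phi (coef i x) j c = 0}.
    by apply: cid; apply: phi_supp; exact: coef_inspan.
  exists (flatten [seq [seq (i, j) | j <- sval (r i)] | i <- index_enum 'I_n]).
  move=> [i j] nij c /=; apply: (svalP (r i)) => ji; apply: nij.
  apply: (In_flatten_map (a := i)).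
    by apply/In_mem; rewrite mem_index_enum.
  exact: (List.in_map (fun j => (i, j))).
- by move=> a x y _ _ [i j] c /=; rewrite coef_linear; apply: phi_lin;
    exact: coef_inspan.
- move=> f x _ [i j] c /=; rewrite coef_dact.
  by apply: phi_act; exact: coef_inspan.
- move=> x y _ _ xy.
  have coefxy i : coef i x = coef i y.
    apply: phi_inj; [exact: coef_inspan | exact: coef_inspan |].
    by move=> j; exact: xy (i, j).
  rewrite (coord_vbasis (memvf x)) (coord_vbasis (memvf y)).
  by apply: eq_bigr => i _; rewrite -!counit_coef coefxy.
Qed.

End CoefficientCoideal.

(* The coideal spanned by s (with basis b) is modelled on the coordinate
   space 'rV_m; its coaction transports the representatives cop_b i of
   Delta b_i through the dual basis dual_b. *)
Section CoidealComodule.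
Variables (s b : seq C).
Hypothesis span_b : forall x, inspan b x <-> inspan s x.
Hypothesis coid_s : right_coideal cC s.
Let m := size b.
Variable dual_b : 'I_m -> {scalar C}.
Hypothesis dual_bE : forall i j : 'I_m, dual_b j b`_i = (i == j)%:R.
Variable cop_b : 'I_m -> seq (C * C).
Hypothesis cop_bE : forall i : 'I_m, teq2 (cop cC b`_i) (cop_b i).

Lemma dual_b_sum (a : 'I_m -> k) j : dual_b j (\sum_(i < m) a i *: b`_i) = a j.
Proof.
rewrite scalar_sumZ (bigD1 j) //= dual_bE eqxx mulr1 big1 ?addr0 //.
by move=> i /negbTE ij; rewrite dual_bE ij mulr0.
Qed.

Definition coords (x : C) : 'rV[k]_m := \row_j dual_b j x.

Definition of_coords (v : 'rV[k]_m) : C := \sum_(i < m) v 0 i *: b`_i.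

Lemma coordsP a x y : coords (a *: x + y) = a *: coords x + coords y.
Proof. by apply/rowP => j; rewrite !mxE linearP. Qed.

Lemma of_coordsP a v w :
  of_coords (a *: v + w) = a *: of_coords v + of_coords w.
Proof.
rewrite /of_coords scaler_sumr -big_split /=; apply: eq_bigr => i _.
by rewrite !mxE scalerDl scalerA.
Qed.

Lemma of_coordsK v : coords (of_coords v) = v.
Proof. by apply/rowP => j; rewrite mxE dual_b_sum. Qed.

Lemma coordsK x : inspan b x -> of_coords (coords x) = x.
Proof.
by move=> [a ->]; apply: eq_bigr => i _; rewrite mxE dual_b_sum.
Qed.

Lemma inspan_of_coords v : inspan s (of_coords v).
Proof. by apply/span_b; exists (fun i => v 0 i). Qed.

Definition coideal_coact (v : 'rV[k]_m) : seq ('rV[k]_m * C) :=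
  flatten [seq [seq (v 0 i *: coords q.1, q.2) | q <- cop_b i]
          | i <- index_enum 'I_m].

Lemma coideal_coact_dact (h : {scalar C}) v :
  \sum_(p <- coideal_coact v) h p.2 *: p.1 = coords (cact cC h (of_coords v)).
Proof.
apply/rowP => j; rewrite mxE scalar_cact -conv_scalarE scalar_sumZ summxE.
rewrite big_flatten /= big_map; apply: eq_bigr => i _.
rewrite cop_bE /tev2 big_map mulr_sumr.
by apply: eq_bigr => q _; rewrite /= !mxE mulrCA [h _ * _]mulrC.
Qed.

Definition scalar_coords (f : {scalar 'rV[k]_m}) : {scalar C} :=
  scalar_of (fun a x y => etrans (congr1 f (coordsP a x y)) (linearP f a _ _)).

Lemma tev2_coideal_coact (f : {scalar 'rV[k]_m}) (g : {scalar C}) v :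
  tev2 f g (coideal_coact v) = tev2 (scalar_coords f) g (cop cC (of_coords v)).
Proof.
rewrite -conv_scalarE scalar_sumZ /tev2 big_flatten /= big_map.
apply: eq_bigr => i _; rewrite big_map cop_bE /tev2 mulr_sumr.
by apply: eq_bigr => q _ /=; rewrite linearZ mulrA.
Qed.

Lemma coideal_coact_linear (f : {scalar 'rV[k]_m}) (g : {scalar C}) a v w :
  tev2 f g (coideal_coact (a *: v + w)) =
  a * tev2 f g (coideal_coact v) + tev2 f g (coideal_coact w).
Proof. by rewrite !tev2_coideal_coact of_coordsP cop_linear. Qed.

Lemma coideal_coact_counit v :
  \sum_(p <- coideal_coact v) counit cC p.2 *: p.1 = v.
Proof. by rewrite coideal_coact_dact /cact counitr of_coordsK. Qed.

Lemma coideal_coact_assoc v :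
  teq3 (flatten [seq [seq (q.1, q.2, p.2) | q <- coideal_coact p.1]
                | p <- coideal_coact v])
       (flatten [seq [seq (p.1, q.1, q.2) | q <- cop cC p.2]
                | p <- coideal_coact v]).
Proof.
move=> f g h; rewrite !big_flatten /= !big_map.
under eq_bigr do rewrite big_map.
under [RHS]eq_bigr do rewrite big_map.
pose fg := scalar_of (fun a x y =>
  etrans (congr1 (conv_scalar (scalar_coords f) g) (of_coordsP a x y))
         (linearP _ a _ _)).
transitivity (\sum_(p <- coideal_coact v) fg p.1 * h p.2).
  apply: eq_bigr => p _ /=; rewrite -mulr_suml.
  by have := tev2_coideal_coact f g p.1; rewrite /tev2 => ->.
transitivity (\sum_(p <- coideal_coact v) f p.1 * conv_scalar g h p.2);
  last first.
  by apply: eq_bigr => p _ /=; rewrite /tev2 mulr_sumr; apply: eq_bigr => q _;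
    rewrite mulrA.
rewrite (eq_bigr _ (fun p _ => mulrC _ _)) -scalar_sumZ coideal_coact_dact.
rewrite [RHS](eq_bigr _ (fun p _ => mulrC _ _)) -scalar_sumZ coideal_coact_dact.
rewrite /= coordsK; last first.
  by apply/span_b; apply: cact_inspan => //; exact: inspan_of_coords.
by rewrite -/(scalar_coords f _) cop_cact -scalar_cact.
Qed.

Definition coideal_comodule : rcomodule cC 'rV[k]_m :=
  RComodule coideal_coact_linear coideal_coact_assoc coideal_coact_counit.

Lemma coideal_embeds_of_basis :
  left_fqcF cC -> embeds_in_free cC (inspan s) (cact cC).
Proof.
move=> /(_ _ coideal_comodule) [I [phi [phi_supp phi_lin phi_act phi_inj]]].
exists I, (fun x => phi (coords x)); split.
- by move=> x _; exact: phi_supp.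
- by move=> a x y _ _ i c; rewrite coordsP; exact: phi_lin.
- move=> f x /span_b sx i c.
  suff -> : coords (cact cC f x) = dact coideal_comodule f (coords x).
    exact: phi_act.
  by rewrite /dact /= coideal_coact_dact coordsK.
- move=> x y /span_b sx /span_b sy xy.
  by rewrite -(coordsK sx) -(coordsK sy) (phi_inj _ _ Logic.I Logic.I xy).
Qed.

End CoidealComodule.

Lemma coideal_embeds_in_free (s : seq C) : left_fqcF cC ->
  right_coideal cC s -> embeds_in_free cC (inspan s) (cact cC).
Proof.
move=> fqcF coid_s; have [b [indb span_b]] := inspan_basis s.
have dual_b (j : 'I_(size b)) :
    {F : {scalar C} | forall i : 'I_(size b), F b`_i = (i == j)%:R}.
  exact/cid/scalar_coord_exists.
have cop_b (i : 'I_(size b)) : {t | teq2 (cop cC b`_i) t}.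
  apply: cid; have /coid_s [t [_ bt]] : inspan s b`_i.
    exact/span_b/mem_inspan/mem_nth.
  by exists t.
exact: (coideal_embeds_of_basis span_b coid_s (fun i j => svalP (dual_b j) i)
          (fun i => svalP (cop_b i)) fqcF).
Qed.

End CoalgebraDual.

Theorem proposition3p9 (k : fieldType) (C : lmodType k) (cC : coalgebra C) :
  left_fqcF cC <->
  (forall s : seq C, right_coideal cC s ->
     embeds_in_free cC (inspan s) (cact cC)).
Proof.
split=> [fqcF s|coid_embeds M rho]; first exact: coideal_embeds_in_free.
exact/comodule_embeds_in_free/coid_embeds/coefs_right_coideal.
Qed.
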